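(* Let $k\ge1$. Every $k$-primitive element $f\in\mathcal{A}$ can be written as a polynomial of degree at most $k$, with complex coefficients, in finitely many $1$-primitive elements of $\mathcal{A}$.
   Context: Let $G$ be an abelian group written additively with identity $e=0$ (in the paper, $G$ is the group, under pointwise addition, of finite complex linear combinations of characteristic functions of measurable subsets of a measurable set $H$). Let $\mathcal{A}$ be an algebra of complex-valued functions on $G$ (pointwise operations, containing the constants) such that for every $f\in\mathcal{A}$ there exist finitely many $f'_i,f''_i\in\mathcal{A}$ with $f(x+y)=\sum_i f'_i(x)f''_i(y)$ for all $x,y\in G$ (so that the coproduct $\Delta f(x,y)=f(x+y)$ makes $\mathcal{A}$ a commutative, cocommutative bialgebra with counit $\epsilon(f)=f(0)$; in the paper $\mathcal{A}$ is the algebra of smooth functions on $G$). Coderivatives: for $f\colon G\to\mathbb{C}$ define $(\mathcal{L}f)(x_0,x_1)=f(x_0+x_1)-f(x_0)$ and recursively $(\mathcal{L}^k f)(x_0,x_1,\dots,x_k)=(\mathcal{L}^{k-1}f)(x_0+x_1,x_2,\dots,x_k)-(\mathcal{L}^{k-1}f)(x_0,x_2,\dots,x_k)$. Write $(\mathcal{L}^kf)(e)$ for the function $(x_1,\dots,x_k)\mapsto(\mathcal{L}^kf)(0,x_1,\dots,x_k)$ on $G^k$; explicitly $(\mathcal{L}^kf)(e)(x_1,\dots,x_k)=\sum_{S\subseteq\{1,\dots,k\}}(-1)^{k-|S|}f\big(\sum_{i\in S}x_i\big)$. A function $f$ is called $k$-primitive if $(\mathcal{L}^r f)(e)=0$ for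 all $r>k$ while $(\mathcal{L}^k f)(e)\neq0$. In particular $f$ is $1$-primitive iff $f$ is nonconstant and $f(x+y)-f(x)-f(y)+f(0)=0$ for all $x,y$ (i.e. $f-f(0)$ is additive). *)

From HB Require Import structures.
From mathcomp Require Import all_boot all_order all_algebra.
From mathcomp Require Import complex.
From mathcomp Require Import reals.
From mathcomp Require Import mpoly.
Set Implicit Arguments. Unset Strict Implicit. Unset Printing Implicit Defensive.
Import Order.TTheory GRing.Theory Num.Theory.
Local Open Scope ring_scope.

(* Iterated coderivative, following the paper's recursion:
   (L^0 f)(x0) = f x0,
   (L^k f)(x0,x1,...,xk) = (L^{k-1} f)(x0+x1,x2,...,xk) - (L^{k-1} f)(x0,x2,...,xk).
   The arguments x1,x2,... are given as a sequence xs : nat -> G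
   (xs 0 = x1, xs 1 = x2, ...); only the first k entries are used. *)
Fixpoint coder (G : zmodType) (K : pzRingType) (k : nat) (f : G -> K)
  : G -> (nat -> G) -> K :=
  match k with
  | 0 => fun x0 _ => f x0
  | k'.+1 => fun x0 xs =>
      coder k' f (x0 + xs 0%N) (fun i => xs i.+1)
      - coder k' f x0 (fun i => xs i.+1)
  end.

Definition coder_e (G : zmodType) (K : pzRingType) (k : nat) (f : G -> K)
  (xs : nat -> G) : K := coder k f 0 xs.

Definition primitive (G : zmodType) (K : pzRingType) (k : nat) (f : G -> K) : Prop :=
  (forall r : nat, (k < r)%N -> forall xs : nat -> G, coder_e r f xs = 0)
  /\ (exists xs : nat -> G, coder_e k f xs != 0).

Definition coproduct_algebra (G : zmodType) (K : pzRingType) (A : (G -> K) -> Prop) : Prop :=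
  [/\ (forall c : K, A (fun _ => c)),
      (forall f g, A f -> A g -> A (fun x => f x + g x)),
      (forall f g, A f -> A g -> A (fun x => f x * g x)),
      (forall (c : K) f, A f -> A (fun x => c * f x))
    & (forall f, A f -> exists (n : nat) (f1 f2 : 'I_n -> G -> K),
          (forall i, A (f1 i)) /\ (forall i, A (f2 i)) /\
          (forall x y : G, f (x + y) = \sum_(i < n) f1 i x * f2 i y))].

(* If f has degree <= k+1, then
   H y xs := (L^{k+1} f)(0, y, xs) is additive in y, and the coproduct of f makes it a
   finite sum of products; Gaussian elimination, done once in each variable, rewrites it
   as H y xs = sum_l u_l y * H (b_l) xs with u_l additive and in A.  The function
   q := sum_l u_l * (f(. + b_l) - f) then satisfies the Euler identity
   L^{k+1} q = (k+1) L^{k+1} f (Leibniz rule for additive factors plus the symmetry of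
   coderivatives), so f - q/(k+1) has degree <= k.  By induction it, and every
   f(. + b_l) - f, is a polynomial of degree <= k in 1-primitives, while each u_l is
   either 1-primitive or zero. *)

From HB Require Import structures.
From mathcomp Require Import all_boot all_order all_algebra.
From mathcomp Require Import complex reals mpoly.
From mathcomp Require Import ring.
From Stdlib Require Import FunctionalExtensionality Classical.
Import Order.TTheory GRing.Theory Num.Theory.
Local Open Scope ring_scope.
Set Implicit Arguments. Unset Strict Implicit. Unset Printing Implicit Defensive.

Section Coderivative.
Variables (G : zmodType) (K : comPzRingType).
Implicit Types (f g : G -> K) (xs : nat -> G).

Definition fcons y xs : nat -> G := fun i => if i is i'.+1 then xs i' else y.
Definition fdel (j : nat) xs : nat -> G := fun i => if (i < j)%N then xs i else xs i.+1.

Lemma coder_cons k f x0 y xs :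
  coder k.+1 f x0 (fcons y xs) = coder k f (x0 + y) xs - coder k f x0 xs.
Proof. by []. Qed.

Lemma eq_coder k f g : f =1 g -> forall x0 xs, coder k f x0 xs = coder k g x0 xs.
Proof. by move=> fg; elim: k => [|k IH] x0 xs //=; rewrite !IH. Qed.

Lemma eq_coder_args k f x0 xs ys : xs =1 ys -> coder k f x0 xs = coder k f x0 ys.
Proof.
elim: k x0 xs ys => [//|k IH] x0 xs ys eq_xy /=.
by rewrite eq_xy !(IH _ _ (fun i => ys i.+1)).
Qed.

Lemma coderD k f g x0 xs :
  coder k (fun x => f x + g x) x0 xs = coder k f x0 xs + coder k g x0 xs.
Proof. by elim: k x0 xs => [//|k IH] x0 xs /=; rewrite !IH; ring. Qed.

Lemma coderB k f g x0 xs :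
  coder k (fun x => f x - g x) x0 xs = coder k f x0 xs - coder k g x0 xs.
Proof. by elim: k x0 xs => [//|k IH] x0 xs /=; rewrite !IH; ring. Qed.

Lemma coderMl k (c : K) f x0 xs :
  coder k (fun x => c * f x) x0 xs = c * coder k f x0 xs.
Proof. by elim: k x0 xs => [//|k IH] x0 xs /=; rewrite !IH; ring. Qed.

Lemma coder_sum k n (F : 'I_n -> G -> K) x0 xs :
  coder k (fun x => \sum_(i < n) F i x) x0 xs = \sum_(i < n) coder k (F i) x0 xs.
Proof.
elim: n F => [|n IH] F.
  rewrite big_ord0 (@eq_coder _ _ (fun _ => 0)) => [|x]; last by rewrite big_ord0.
  by elim: k x0 xs => [//|k IHk] x0 xs /=; rewrite !IHk subrr.
rewrite big_ord_recr /= -(IH (fun i => F (widen_ord (leqnSn n) i))) -coderD.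
by apply: eq_coder => x; rewrite big_ord_recr.
Qed.

Lemma coder_shift k f y x0 xs :
  coder k (fun z => f (z + y)) x0 xs = coder k f (x0 + y) xs.
Proof. by elim: k x0 xs => [//|k IH] x0 xs /=; rewrite !IH addrAC. Qed.

Lemma coder_diff k f y x0 xs :
  coder k (fun z => f (z + y) - f z) x0 xs = coder k.+1 f x0 (fcons y xs).
Proof. by rewrite coderB coder_shift. Qed.

Lemma coder_swap k f x0 a b xs :
  coder k.+2 f x0 (fcons a (fcons b xs)) = coder k.+2 f x0 (fcons b (fcons a xs)).
Proof. by rewrite /= [x0 + b + a]addrAC; ring. Qed.

Lemma coder_rot k j f x0 xs : (j < k)%N ->
  coder k f x0 (fcons (xs j) (fdel j xs)) = coder k f x0 xs.
Proof.
elim: j k f x0 xs => [|j IH] k f x0 xs hj.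
  by apply: eq_coder_args; case.
case: k hj => [//|[//|k]] hj.
pose ys i := xs i.+1.
rewrite (@eq_coder_args _ _ _ _ (fcons (xs j.+1) (fcons (xs 0%N) (fdel j ys)))); last first.
  by move=> [|[|i]].
rewrite coder_swap coder_cons.
by rewrite (IH _ _ _ ys) // (IH _ _ _ ys).
Qed.

Lemma coder_leibniz k (u w : G -> K) (u_add : {morph u : a b / a + b}) x0 xs :
  coder k (fun x => u x * w x) x0 xs =
  u x0 * coder k w x0 xs + \sum_(j < k) u (xs j) * coder k.-1 w (x0 + xs j) (fdel j xs).
Proof.
elim: k x0 xs => [|k IH] x0 xs; first by rewrite big_ord0 addr0.
rewrite /= !IH big_ord_recl u_add /=.
case: k IH => [|k] IH; first by rewrite !big_ord0; ring.
set ys := fun i => xs i.+1.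
have shift_sum : \sum_(i < k.+1) u (xs (bump 0 i)) *
    coder k.+1 w (x0 + xs (bump 0 i)) (fdel (bump 0 i) xs) =
  \sum_(j < k.+1) u (ys j) * coder k w (x0 + xs 0%N + ys j) (fdel j ys) -
  \sum_(j < k.+1) u (ys j) * coder k w (x0 + ys j) (fdel j ys).
  rewrite -sumrB; apply: eq_bigr => i _.
  rewrite /bump add1n -mulrBr [x0 + xs 0%N + _]addrAC.
  by rewrite (@eq_coder_args _ _ _ _ (fcons (xs 0%N) (fdel i ys))); last by case.
by rewrite shift_sum /=; ring.
Qed.

Definition coder_deg_le k f :=
  forall r, (k < r)%N -> forall x0 xs, coder r f x0 xs = 0.

Lemma coder_deg_le_succ k f :
  (forall x0 xs, coder k.+1 f x0 xs = 0) -> coder_deg_le k f.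
Proof.
move=> vanish r; elim: r => [//|r IH] lt_kr x0 xs.
move: lt_kr; rewrite ltnS leq_eqVlt => /predU1P[<-|lt_kr]; first exact: vanish.
by rewrite /= !IH // subrr.
Qed.

Lemma coder_deg_le_base k f x0 xs : coder_deg_le k f -> coder k f x0 xs = coder k f 0 xs.
Proof.
move=> /(_ k.+1 (ltnSn k) 0 (fcons x0 xs)).
by rewrite coder_cons add0r => /eqP; rewrite subr_eq0 => /eqP.
Qed.

Lemma coder_deg_le_e k f :
  (forall r, (k < r)%N -> forall xs, coder_e r f xs = 0) -> coder_deg_le k f.
Proof.
move=> vanish r lt_kr x0 xs; have := vanish r.+1 (ltnW lt_kr) (fcons x0 xs).
by rewrite /coder_e coder_cons add0r -/(coder_e r f xs) vanish // subr0.
Qed.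

Lemma coder_deg_le_diff k f y :
  coder_deg_le k.+1 f -> coder_deg_le k (fun z => f (z + y) - f z).
Proof. by move=> f_deg r lt_kr x0 xs; rewrite coder_diff f_deg. Qed.

Lemma coder_deg_le_additive k f xs : coder_deg_le k.+1 f ->
  {morph (fun y => coder k.+1 f 0 (fcons y xs)) : a b / a + b}.
Proof.
move=> f_deg a b; cbv beta; rewrite !coder_cons !add0r.
have := coder_deg_le_base b xs (coder_deg_le_diff a f_deg).
rewrite !coder_diff !coder_cons add0r [b + a]addrC => translate_a.
by rewrite -[coder k f (a + b) xs](subrK (coder k f b xs)) translate_a; ring.
Qed.

Lemma coder_euler k m f (u : 'I_m -> G -> K) (b : 'I_m -> G) :
    coder_deg_le k.+1 f -> (forall l, {morph u l : x y / x + y}) ->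
    (forall y xs, coder k.+1 f 0 (fcons y xs) =
                  \sum_(l < m) u l y * coder k.+1 f 0 (fcons (b l) xs)) ->
  forall x0 xs, coder k.+1 (fun z => \sum_(l < m) u l z * (f (z + b l) - f z)) x0 xs =
                k.+1%:R * coder k.+1 f 0 xs.
Proof.
move=> f_deg u_add decomp x0 xs; rewrite coder_sum.
have leibniz_l l : coder k.+1 (fun z => u l z * (f (z + b l) - f z)) x0 xs =
    \sum_(j < k.+1) u l (xs j) * coder k.+1 f 0 (fcons (b l) (fdel j xs)).
  have diff_deg := coder_deg_le_diff (b l) f_deg.
  rewrite coder_leibniz // diff_deg // mulr0 add0r.
  by apply: eq_bigr => j _; rewrite (coder_deg_le_base _ _ diff_deg) coder_diff.
rewrite (eq_bigr _ (fun l _ => leibniz_l l)) exchange_big /=.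
rewrite (eq_bigr (fun _ => coder k.+1 f 0 xs)) ?sumr_const ?card_ord ?mulr_natl // => j _.
by rewrite -decomp coder_rot.
Qed.

Lemma additive_primitive (u : G -> K) a :
  {morph u : x y / x + y} -> u a != 0 -> primitive 1 u.
Proof.
move=> u_add u_a; have u0 : u 0 = 0 by apply: (addrI (u 0)); rewrite -u_add !addr0.
split; last by exists (fun _ => a); rewrite /coder_e /= add0r u0 subr0.
move=> r lt_1r xs; apply: (coder_deg_le_succ (k := 1)) => //= x0 ys.
by rewrite !u_add; ring.
Qed.

End Coderivative.

Section SeparableKernel.
Variables (F : fieldType) (Y X : Type) (P : (Y -> F) -> Prop).
Hypothesis P_addZ : forall (c : F) phi psi, P phi -> P psi -> P (fun y => phi y + c * psi y).
Hypothesis P_Z : forall (c : F) phi, P phi -> P (fun y => c * phi y).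
Variable H : Y -> X -> F.

Definition spanned_by_slices :=
  exists m (a : 'I_m -> Y -> F) (b : 'I_m -> Y),
    (forall j, P (a j)) /\ forall y x, H y x = \sum_(j < m) a j y * H (b j) x.

Lemma sum_eliminate m (u : 'I_m -> Y -> F) (v : 'I_m -> F) (phi : Y -> F) y0 c y :
  \sum_(j < m) (u j y + - (u j y0 / c) * phi y) * v j =
  \sum_(j < m) u j y * v j - phi y / c * \sum_(j < m) u j y0 * v j.
Proof. by rewrite mulr_sumr -sumrB; apply: eq_bigr => j _; ring. Qed.

(* Gaussian elimination: a point y0 with phi_0(y0) <> 0 trades the term phi_0 * psi_0
   for a multiple of the slice H y0, at the cost of P-combinations of the other
   coefficients with phi_0. *)
Lemma kernel_eliminate n : forall m (a : 'I_m -> Y -> F) (b : 'I_m -> Y)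
    (phi : 'I_n -> Y -> F) (psi : 'I_n -> X -> F),
    (forall j, P (a j)) -> (forall i, P (phi i)) ->
    (forall y x, H y x = \sum_(j < m) a j y * H (b j) x + \sum_(i < n) phi i y * psi i x) ->
  spanned_by_slices.
Proof.
elim: n => [|n IH] m a b phi psi Pa Pphi decomp.
  by exists m, a, b; split => // y x; rewrite decomp big_ord0 addr0.
have [[y0 nz_c]|phi0_eq0] := classic (exists y0, phi ord0 y0 != 0); last first.
  apply: (IH m a b (fun i => phi (lift ord0 i)) (fun i => psi (lift ord0 i))) => // y x.
  have phi0_y : phi ord0 y = 0 by apply/eqP; apply: contra_notT phi0_eq0 => ?; exists y.
  by rewrite decomp big_ord_recl phi0_y mul0r add0r.
set c := phi ord0 y0 in nz_c.
pose elim_col (u : Y -> F) y := u y + - (u y0 / c) * phi ord0 y.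
pose a' (j : 'I_m.+1) :=
  if unlift ord0 j is Some j' then elim_col (a j') else fun y => c^-1 * phi ord0 y.
pose b' (j : 'I_m.+1) := if unlift ord0 j is Some j' then b j' else y0.
apply: (IH m.+1 a' b' (fun i => elim_col (phi (lift ord0 i))) (fun i => psi (lift ord0 i))).
- by move=> j; rewrite /a'; case: (unlift ord0 j) => [j'|]; [apply: P_addZ|apply: P_Z].
- by move=> i; apply: P_addZ.
move=> y x; rewrite big_ord_recl /a' /b' unlift_none.
rewrite (eq_bigr (fun j => elim_col (a j) y * H (b j) x)) => [|j _]; last by rewrite liftK.
rewrite /elim_col sum_eliminate (sum_eliminate (fun i => phi (lift ord0 i))).
have := decomp y0 x; have := decomp y x; rewrite !big_ord_recl -/c => -> ->.
by field.
Qed.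

Lemma separable_kernel n (phi : 'I_n -> Y -> F) (psi : 'I_n -> X -> F) :
    (forall i, P (phi i)) -> (forall y x, H y x = \sum_(i < n) phi i y * psi i x) ->
  spanned_by_slices.
Proof.
move=> Pphi decomp.
pose no_point (i : 'I_0) : Y := False_rect Y (notF (ltn_ord i)).
apply: (@kernel_eliminate n 0 (fun _ _ => 0) no_point phi psi) => //; first by case.
by move=> y x; rewrite big_ord0 add0r.
Qed.

End SeparableKernel.

Section RenameVariables.
Variable K : idomainType.

Lemma msizeM_leq n (p q : {mpoly K[n]}) d e :
  (msize p <= d.+1)%N -> (msize q <= e.+1)%N -> (msize (p * q) <= (d + e).+1)%N.
Proof.
have [->|nz_p] := eqVneq p 0; first by rewrite mul0r msize0.
have [->|nz_q] := eqVneq q 0; first by rewrite mulr0 msize0.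
rewrite msizeM // => le_p le_q.
by move: (leq_add le_p le_q); rewrite -subn1 leq_subLR add1n addSn addnS.
Qed.

Lemma msize_prod_linear n k (q : 'I_n -> {mpoly K[k]}) (e : 'I_n -> nat) :
    (forall i, msize (q i) <= 2)%N ->
  (msize (\prod_(i < n) q i ^+ e i) <= (\sum_(i < n) e i).+1)%N.
Proof.
move=> lin; elim/big_rec2: _ => [|i d r _ le_r]; first by rewrite msize1.
have le_pow j : (msize (q i ^+ j) <= j.+1)%N.
  elim: j => [|j IH]; first by rewrite expr0 msize1.
  by rewrite exprS; apply: (msizeM_leq (d := 1)).
by rewrite msizeM_leq.
Qed.

Definition mrename n k (h : 'I_n -> 'I_k) (p : {mpoly K[n]}) : {mpoly K[k]} :=
  p \mPo [tuple 'X_(h i) | i < n].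

Lemma meval_rename n k (h : 'I_n -> 'I_k) p (v : 'I_k -> K) :
  (mrename h p).@[v] = p.@[fun i => v (h i)].
Proof. by rewrite comp_mpoly_meval; apply: meval_eq => i; rewrite tnth_mktuple mevalXU. Qed.

Lemma msize_rename n k (h : 'I_n -> 'I_k) p : (msize (mrename h p) <= msize p)%N.
Proof.
rewrite /mrename comp_mpolyE; apply: leq_trans (mmeasure_sum _ _ _ _) _.
apply/bigmax_leqP_seq => m m_supp _; apply: leq_trans (msizeZ_le _ _) _.
apply: leq_trans (msize_mdeg_lt m_supp); rewrite mdegE.
by apply: msize_prod_linear => i; rewrite tnth_mktuple msizeX mdeg1.
Qed.

End RenameVariables.

Section PolynomialsIn.
Variables (T : Type) (K : idomainType) (P : (T -> K) -> Prop).

Definition poly_in (d : nat) (f : T -> K) :=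
  exists n (g : 'I_n -> T -> K) (p : {mpoly K[n]}),
    (forall j, P (g j)) /\ (msize p <= d.+1)%N /\ forall x, f x = p.@[fun j => g j x].

Lemma poly_in_ext d f f' : f =1 f' -> poly_in d f -> poly_in d f'.
Proof.
move=> eq_f [n [g [p [Pg [sz_p ev_p]]]]]; exists n, g, p.
by split=> //; split=> // x; rewrite -eq_f.
Qed.

Lemma poly_in_mono d d' f : (d <= d')%N -> poly_in d f -> poly_in d' f.
Proof.
move=> le_d [n [g [p [Pg [sz_p ev_p]]]]]; exists n, g, p.
by split=> //; split=> //; apply: leq_trans sz_p _; rewrite ltnS.
Qed.

Lemma poly_in_const c : poly_in 0 (fun _ => c).
Proof.
exists 0, (fun _ _ => c), c%:MP; split; first by case.
by split=> [|x]; rewrite ?mevalC // msizeC leq_b1.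
Qed.

Lemma poly_in_var g : P g -> poly_in 1 g.
Proof.
move=> Pg; exists 1, (fun _ => g), 'X_ord0; split=> //.
by split=> [|x]; rewrite ?mevalXU // msizeX mdeg1.
Qed.

Lemma poly_in_common d1 d2 f1 f2 : poly_in d1 f1 -> poly_in d2 f2 ->
  exists n (g : 'I_n -> T -> K) (p1 p2 : {mpoly K[n]}), (forall j, P (g j)) /\
    [/\ (msize p1 <= d1.+1)%N, (msize p2 <= d2.+1)%N,
        forall x, f1 x = p1.@[fun j => g j x] & forall x, f2 x = p2.@[fun j => g j x]].
Proof.
move=> [n1 [g1 [p1 [Pg1 [sz_p1 ev_p1]]]]] [n2 [g2 [p2 [Pg2 [sz_p2 ev_p2]]]]].
pose g j := match split j with inl i => g1 i | inr i => g2 i end.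
exists (n1 + n2), g, (mrename (@lshift n1 n2) p1), (mrename (@rshift n1 n2) p2).
split; first by move=> j; rewrite /g; case: split.
split; try by apply: leq_trans (msize_rename _ _) _.
- move=> x; rewrite meval_rename ev_p1 /g.
  by apply: meval_eq => i; rewrite (unsplitK (inl _ i)).
- move=> x; rewrite meval_rename ev_p2 /g.
  by apply: meval_eq => i; rewrite (unsplitK (inr _ i)).
Qed.

Lemma poly_in_add d f1 f2 : poly_in d f1 -> poly_in d f2 -> poly_in d (fun x => f1 x + f2 x).
Proof.
move=> /poly_in_common /[apply] -[n [g [p1 [p2 [Pg [sz_p1 sz_p2 ev_p1 ev_p2]]]]]].
exists n, g, (p1 + p2); split=> //; split=> [|x]; last by rewrite mevalD -ev_p1 -ev_p2.
by apply: leq_trans (msizeD_le _ _) _; rewrite geq_max sz_p1 sz_p2.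
Qed.

Lemma poly_in_mul d1 d2 f1 f2 :
  poly_in d1 f1 -> poly_in d2 f2 -> poly_in (d1 + d2) (fun x => f1 x * f2 x).
Proof.
move=> /poly_in_common /[apply] -[n [g [p1 [p2 [Pg [sz_p1 sz_p2 ev_p1 ev_p2]]]]]].
exists n, g, (p1 * p2); split=> //; split=> [|x]; last by rewrite mevalM -ev_p1 -ev_p2.
exact: msizeM_leq.
Qed.

Lemma poly_in_sum d n (F : 'I_n -> T -> K) :
  (forall i, poly_in d (F i)) -> poly_in d (fun x => \sum_(i < n) F i x).
Proof.
elim: n F => [|n IH] F poly_F.
  by apply: poly_in_ext (poly_in_mono (leq0n d) (poly_in_const 0)) => x; rewrite big_ord0.
apply: poly_in_ext (poly_in_add (IH _ (fun i => poly_F _)) (poly_F ord_max)) => x.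
by rewrite big_ord_recr.
Qed.

End PolynomialsIn.

Section PrimitiveDecomposition.
Variables (K : numFieldType) (G : zmodType) (A : (G -> K) -> Prop).
Hypothesis hA : coproduct_algebra A.
Implicit Types (f g u : G -> K).

Lemma A_ext f g : f =1 g -> A f -> A g.
Proof. by move=> /functional_extensionality ->. Qed.

Lemma A_const c : A (fun _ => c).
Proof. by case: hA. Qed.

Lemma A_add f g : A f -> A g -> A (fun x => f x + g x).
Proof. by case: hA => _ A_add _ _ _; apply: A_add. Qed.

Lemma A_mul f g : A f -> A g -> A (fun x => f x * g x).
Proof. by case: hA => _ _ A_mul _ _; apply: A_mul. Qed.

Lemma A_scale c f : A f -> A (fun x => c * f x).
Proof. by case: hA => _ _ _ A_scale _; apply: A_scale. Qed.

Lemma A_sub f g : A f -> A g -> A (fun x => f x - g x).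
Proof.
move=> Af Ag; apply: A_ext (A_add Af (A_scale (-1) Ag)) => x.
by rewrite mulN1r.
Qed.

Lemma A_sum n (F : 'I_n -> G -> K) : (forall i, A (F i)) -> A (fun x => \sum_(i < n) F i x).
Proof.
elim: n F => [|n IH] F AF; first by apply: A_ext (A_const 0) => x; rewrite big_ord0.
apply: A_ext (A_add (IH _ (fun i => AF _)) (AF ord_max)) => x.
by rewrite big_ord_recr.
Qed.

Lemma A_coproduct f : A f -> exists n (f1 f2 : 'I_n -> G -> K),
  (forall i, A (f1 i)) /\ forall x y, f (x + y) = \sum_(i < n) f1 i x * f2 i y.
Proof.
case: hA => _ _ _ _ coproduct /coproduct [n [f1 [f2 [Af1 [_ split_f]]]]].
by exists n, f1, f2.
Qed.

Lemma A_translate f y : A f -> A (fun z => f (z + y)).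
Proof.
case/A_coproduct=> n [f1 [f2 [Af1 split_f]]].
apply: A_ext (A_sum (fun i => A_scale (f2 i y) (Af1 i))) => z.
by rewrite split_f; apply: eq_bigr => i _; rewrite mulrC.
Qed.

Definition primitive1_in g := A g /\ primitive 1 g.

Lemma poly_in_additive u :
  A u -> {morph u : a b / a + b} -> poly_in primitive1_in 1 u.
Proof.
move=> Au u_add; have [[a u_a]|u_eq0] := classic (exists a, u a != 0).
  exact/poly_in_var/(conj Au)/(additive_primitive u_add u_a).
apply: poly_in_ext (poly_in_mono (leq0n 1) (poly_in_const _ 0)) => x.
by apply/esym/eqP; apply: contra_notT u_eq0 => ?; exists x.
Qed.

Lemma coder_slices k f : A f -> coder_deg_le k.+1 f ->
  exists m (u : 'I_m -> G -> K) (b : 'I_m -> G),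
    (forall l, A (u l) /\ {morph u l : x y / x + y}) /\
    forall y xs, coder k.+1 f 0 (fcons y xs) =
                 \sum_(l < m) u l y * coder k.+1 f 0 (fcons (b l) xs).
Proof.
move=> Af f_deg; have [n [f1 [f2 [Af1 split_f]]]] := A_coproduct Af.
pose H y xs := coder k.+1 f 0 (fcons y xs).
have H_sep y xs : H y xs = \sum_(i < n) (f1 i y - f1 i 0) * coder k (f2 i) 0 xs.
  have at_base x : coder k f x xs = \sum_(i < n) f1 i x * coder k (f2 i) 0 xs.
    rewrite -{1}[x]add0r -coder_shift.
    rewrite (@eq_coder _ _ _ _ (fun t => \sum_(i < n) f1 i x * f2 i t)) => [|t].
      by rewrite coder_sum; apply: eq_bigr => i _; rewrite coderMl.
    by rewrite addrC split_f.
  rewrite /H coder_cons add0r !at_base -sumrB.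
  by apply: eq_bigr => i _; rewrite mulrBl.
have [m1 [a [b1 [_ span1]]]] := @separable_kernel K (nat -> G) G (fun _ => True)
  (fun _ _ _ _ _ => I) (fun _ _ _ => I) (fun xs y => H y xs) n
  (fun i => coder k (f2 i) 0) (fun i y => f1 i y - f1 i 0) (fun _ => I)
  (fun xs y => etrans (H_sep y xs) (eq_bigr _ (fun i _ => mulrC _ _))).
pose additive_in u := A u /\ {morph u : x y / x + y}.
have additive_addZ c u v :
    additive_in u -> additive_in v -> additive_in (fun y => u y + c * v y).
  move=> [Au u_add] [Av v_add]; split; first exact: A_add Au (A_scale c Av).
  by move=> x y; rewrite u_add v_add; ring.
have additive_Z c u : additive_in u -> additive_in (fun y => c * u y).
  by move=> [Au u_add]; split; [exact: A_scale | move=> x y; rewrite u_add; ring].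
have H_additive j : additive_in (H ^~ (b1 j)).
  split; last exact: coder_deg_le_additive.
  apply: A_ext (A_sum (fun i => A_scale (coder k (f2 i) 0 (b1 j))
    (A_sub (Af1 i) (A_const (f1 i 0))))) => y.
  by rewrite H_sep; apply: eq_bigr => i _; rewrite mulrC.
have [m [u [b [Au span]]]] := @separable_kernel K G (nat -> G) additive_in additive_addZ
  additive_Z H m1 (fun j => H ^~ (b1 j)) a H_additive
  (fun y xs => etrans (span1 xs y) (eq_bigr _ (fun j _ => mulrC _ _))).
by exists m, u, b.
Qed.

Lemma coder_deg_le_poly_in k f : A f -> coder_deg_le k f -> poly_in primitive1_in k f.
Proof.
elim: k f => [|k IH] f Af f_deg.
  apply: poly_in_ext (poly_in_const _ (f 0)) => x.
  exact: esym (coder_deg_le_base x (fun _ => 0) f_deg).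
have [m [u [b [Au slices]]]] := coder_slices Af f_deg.
pose w l z := f (z + b l) - f z.
pose q z := \sum_(l < m) u l z * w l z.
have poly_q : poly_in primitive1_in k.+1 q.
  apply: poly_in_sum => l; have [Aul ul_add] := Au l.
  apply: (poly_in_mul (poly_in_additive Aul ul_add)).
  exact: IH (A_sub (A_translate _ Af) Af) (coder_deg_le_diff _ f_deg).
have Aq : A q.
  apply: A_sum => l; apply: A_mul (Au l).1 (A_sub (A_translate _ Af) Af).
pose c : K := (k.+1%:R)^-1.
have r_deg : coder_deg_le k (fun z => f z - c * q z).
  apply: coder_deg_le_succ => x0 xs.
  rewrite coderB coderMl (coder_euler f_deg (fun l => (Au l).2) slices).
  by rewrite (coder_deg_le_base _ _ f_deg) mulrA mulVf ?mul1r ?subrr // pnatr_eq0.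
have poly_r := IH _ (A_sub Af (A_scale c Aq)) r_deg.
apply: poly_in_ext (poly_in_add (poly_in_mono (leqnSn k) poly_r)
  (poly_in_mul (poly_in_const _ c) poly_q)) => z.
by rewrite subrK.
Qed.

End PrimitiveDecomposition.

Unset Implicit Arguments.
Set Strict Implicit.

Theorem mainTheorem2 (R : realType) (G : zmodType) (A : (G -> R[i]) -> Prop)
  (hA : coproduct_algebra A) (k : nat) (hk : (1 <= k)%N)
  (f : G -> R[i]) (hfA : A f) (hf : primitive k f) :
  exists (n : nat) (g : 'I_n -> G -> R[i]) (p : {mpoly R[i][n]}),
    (forall j, A (g j) /\ primitive 1 (g j)) /\
    (msize p <= k.+1)%N /\
    (forall x : G, f x = p.@[fun j => g j x]).
Proof.
have := coder_deg_le_poly_in hA hfA (coder_deg_le_e (proj1 hf)).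
by move=> [n [g [p poly_f]]]; exists n, g, p.
Qed.
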